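(* Let $\beta>0$, $\beta_a>0$, $\alpha>0$. Consider the system \[ \begin{aligned} \dot s_a&=-\beta s_a i, & \dot s_r&=-\beta s_r i,\\ \dot i_a&=\beta s_a i-\beta_a s_a i_a-\alpha i_a, & \dot i_r&=\beta s_r i-\beta_a s_a i_r-\alpha i_r,\\ \dot r&=\beta_a s_a i+\alpha i, && \end{aligned} \] where $i=i_a+i_r$, with initial conditions $(s_a(0),s_r(0),i_a(0),i_r(0))=(s_{a0},s_{r0},i_{a0},i_{r0})\in[0,1]^4$ satisfying $s_{a0}+s_{r0}+i_{a0}+i_{r0}=1$ and $r(0)=0$. Let $i_0=i_{a0}+i_{r0}$ and $s_0=s_{a0}+s_{r0}=1-i_0$. Then the peak infection level $i_{\mathrm{pk}}\triangleq\max_{t\ge 0} i(t)$ satisfies \[ i_{\mathrm{pk}}=\begin{cases} 1-\dfrac{\alpha}{\beta}-\dfrac{\beta_a}{\beta}s_{a0}+\dfrac{\alpha}{\beta}\log\dfrac{\alpha}{\beta s_0-\beta_a s_{a0}}, & \text{if } s_{a0}<\dfrac{\beta s_0-\alpha}{\beta_a},\\[3mm] i_0, & \text{if } s_{a0}\ge \dfrac{\beta s_0-\alpha}{\beta_a}. \end{cases} \]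
   Context: This is the A-SIR active cyber defense model: $s_a,s_r$ are the fractions of susceptible active-defender and susceptible non-active nodes, $i_a,i_r$ the fractions of infected active-defender and infected non-active nodes, and $r$ the fraction of permanently protected (recovered) nodes; $\beta$ is the infection rate, $\beta_a$ the active clean-up rate, $\alpha$ the reactive recovery rate. *)

From Stdlib Require Import Reals.
From Coquelicot Require Import Coquelicot.
Open Scope R_scope.

(* (sa, sr, ia, ir, r) is a solution of the A-SIR system on [0, +oo):
   differentiable on (0,+oo) with the prescribed derivatives, and
   right-continuous at 0 (so the initial values are attained). *)
Definition ASIR_solution (beta beta_a alpha : R)
    (sa sr ia ir r : R -> R) : Prop :=
  (forall t, 0 < t ->
     let i := ia t + ir t in
     is_derive sa t (- beta * sa t * i) /\
     is_derive sr t (- beta * sr t * i) /\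
     is_derive ia t (beta * sa t * i - beta_a * sa t * ia t - alpha * ia t) /\
     is_derive ir t (beta * sr t * i - beta_a * sa t * ir t - alpha * ir t) /\
     is_derive r  t (beta_a * sa t * i + alpha * i)) /\
  filterlim sa (at_right 0) (locally (sa 0)) /\
  filterlim sr (at_right 0) (locally (sr 0)) /\
  filterlim ia (at_right 0) (locally (ia 0)) /\
  filterlim ir (at_right 0) (locally (ir 0)) /\
  filterlim r  (at_right 0) (locally (r 0)).

Definition is_max_on_nonneg (f : R -> R) (v : R) : Prop :=
  (exists t, 0 <= t /\ f t = v) /\ (forall t, 0 <= t -> f t <= v).

From Stdlib Require Import Reals Lra.
From Coquelicot Require Import Coquelicot.
Open Scope R_scope.

(* With i = i_a + i_r and w = beta (s_a + s_r) - beta_a s_a (eff_rate below), the system gives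
   i' = (w - alpha) i and w' = - beta i w.  Both are linear equations, so i stays positive and
   w keeps its sign.  If w(0) <= alpha, then w <= alpha forever, i never increases and the peak
   is i(0).  If w(0) > alpha, then i + (w - alpha ln w) / beta is a first integral, so i(t) is a
   function of w(t) that is largest exactly when w = alpha; and w does reach alpha, since while
   w > alpha the infection grows and ln w decreases at rate at least beta i(0).  Evaluating the
   first integral at w = alpha and using s(0) + i(0) = 1 gives the formula. *)

Definition right_continuous0 (f : R -> R) : Prop :=
  filterlim f (at_right 0) (locally (f 0)).

Lemma right_continuous0_near (f : R -> R) (eps T : R) :
  right_continuous0 f -> 0 < eps -> 0 < T ->
  exists d, 0 < d <= T /\ forall t, 0 < t < d -> Rabs (f t - f 0) < eps.
Proof.
intros Hf Heps HT.
destruct (Hf (ball (f 0) eps) (locally_ball (f 0) (mkposreal eps Heps))) as [d Hd].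
pose proof (cond_pos d).
exists (Rmin d T); split; [apply Rmin_case_strong; lra |].
intros t [Ht0 Htd]. apply (Hd t); [| exact Ht0].
pose proof (Rmin_l d T).
unfold ball; simpl; unfold AbsRing_ball, abs, minus, plus, opp; simpl.
rewrite Ropp_0, Rplus_0_r, Rabs_pos_eq; lra.
Qed.

Lemma continuous_right_continuous0 (f : R -> R) :
  continuous f 0 -> right_continuous0 f.
Proof. intros Hf. eapply filterlim_filter_le_1; [apply filter_le_within | exact Hf]. Qed.

Lemma right_continuous0_comp (f g : R -> R) :
  right_continuous0 f -> continuous g (f 0) -> right_continuous0 (fun t => g (f t)).
Proof. intros Hf Hg. exact (filterlim_comp _ _ _ f g _ _ _ Hf Hg). Qed.

Lemma right_continuous0_plus (f g : R -> R) :
  right_continuous0 f -> right_continuous0 g -> right_continuous0 (fun t => f t + g t).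
Proof. intros Hf Hg. exact (filterlim_comp_2 f g Rplus Hf Hg (filterlim_plus (f 0) (g 0))). Qed.

Lemma right_continuous0_minus (f g : R -> R) :
  right_continuous0 f -> right_continuous0 g -> right_continuous0 (fun t => f t - g t).
Proof.
intros Hf Hg. apply (right_continuous0_plus f (fun t => - g t) Hf).
exact (right_continuous0_comp g Ropp Hg (continuous_opp _ _ (continuous_id _))).
Qed.

Lemma right_continuous0_mult (f g : R -> R) :
  right_continuous0 f -> right_continuous0 g -> right_continuous0 (fun t => f t * g t).
Proof.
intros Hf Hg. exact (filterlim_comp_2 f g Rmult Hf Hg (@filterlim_mult R_AbsRing (f 0) (g 0))).
Qed.

Lemma is_derive_continuity_pt (f : R -> R) (x l : R) :
  is_derive f x l -> continuity_pt f x.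
Proof.
intros Hf. apply continuity_pt_filterlim.
apply (@ex_derive_continuous R_AbsRing R_NormedModule). exists l; exact Hf.
Qed.

Lemma Derive_eta (f : R -> R) (x l : R) :
  is_derive f x l -> Derive (fun y => f y) x = l.
Proof. exact (is_derive_unique f x l). Qed.

Lemma nonincreasing_of_deriv_nonpos (g dg : R -> R) (a b : R) :
  0 <= a <= b ->
  (forall t, 0 < t -> is_derive g t (dg t)) ->
  (forall t, 0 < t -> a <= t <= b -> dg t <= 0) ->
  right_continuous0 g -> g b <= g a.
Proof.
intros Hab Dg Hdg Rg.
assert (from_pos : forall a', 0 < a' -> a <= a' <= b -> g b <= g a').
{ intros a' Ha' Hab'.
  destruct (MVT_gen g a' b dg) as [c [Hc Hgc]].
  - intros x Hx. apply Dg. rewrite Rmin_left in Hx by lra. lra.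
  - intros x Hx. rewrite Rmin_left in Hx by lra.
    apply (is_derive_continuity_pt g x (dg x)), Dg. lra.
  - rewrite Rmin_left, Rmax_right in Hc by lra.
    assert (dg c * (b - a') <= 0) by (apply Rmult_le_0_r; [apply Hdg|]; lra).
    lra. }
destruct (Rlt_or_le 0 a) as [Ha | Ha]; [apply from_pos; lra |].
replace a with 0 by lra.
destruct (Rle_or_lt (g b) (g 0)) as [| Hlt]; [assumption | exfalso].
assert (Hb : 0 < b) by (destruct (Req_dec b 0) as [-> |]; lra).
destruct (right_continuous0_near g (g b - g 0) b Rg) as [d [Hd Hnear]]; [lra | lra |].
specialize (Hnear (d / 2) ltac:(lra)). apply Rabs_def2 in Hnear.
pose proof (from_pos (d / 2) ltac:(lra) ltac:(lra)). lra.
Qed.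

Lemma nondecreasing_of_deriv_nonneg (g dg : R -> R) (a b : R) :
  0 <= a <= b ->
  (forall t, 0 < t -> is_derive g t (dg t)) ->
  (forall t, 0 < t -> a <= t <= b -> 0 <= dg t) ->
  right_continuous0 g -> g a <= g b.
Proof.
intros Hab Dg Hdg Rg.
enough (- g b <= - g a) by lra.
apply (nonincreasing_of_deriv_nonpos (fun t => - g t) (fun t => - dg t) a b Hab).
- intros t Ht. exact (is_derive_opp g t (dg t) (Dg t Ht)).
- intros t Ht Htab. specialize (Hdg t Ht Htab). lra.
- exact (right_continuous0_comp g Ropp Rg (continuous_opp _ _ (continuous_id _))).
Qed.

Lemma right_continuous0_bounded (h : R -> R) (T : R) :
  0 < T -> right_continuous0 h -> (forall t, 0 < t -> continuity_pt h t) ->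
  exists M, forall t, 0 < t <= T -> Rabs (h t) <= M.
Proof.
intros HT Rh Ch.
destruct (right_continuous0_near h 1 T Rh) as [d [Hd Hnear]]; [lra | lra |].
destruct (continuity_ab_maj (fun t => Rabs (h t)) (d / 2) T) as [m [Hm _]]; [lra | |].
{ intros c Hc. apply continuity_pt_filterlim.
  apply (filterlim_comp _ _ _ h Rabs _ (locally (h c))).
  - apply continuity_pt_filterlim, Ch. lra.
  - apply continuous_Rabs. }
exists (Rmax (Rabs (h m)) (Rabs (h 0) + 1)). intros t Ht.
pose proof (Rmax_l (Rabs (h m)) (Rabs (h 0) + 1)).
pose proof (Rmax_r (Rabs (h m)) (Rabs (h 0) + 1)).
destruct (Rlt_or_le t (d / 2)) as [Htd | Htd].
- specialize (Hnear t ltac:(lra)). pose proof (Rabs_triang_inv (h t) (h 0)). lra.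
- specialize (Hm t ltac:(lra)). lra.
Qed.

Lemma IVT_from0 (f : R -> R) (y T : R) :
  right_continuous0 f -> (forall t, 0 < t -> continuity_pt f t) ->
  0 <= T -> f T <= y < f 0 -> exists z, 0 < z <= T /\ f z = y.
Proof.
intros Rf Cf HT Hy.
assert (HT0 : 0 < T) by (destruct (Req_dec T 0) as [-> |]; lra).
destruct (Req_dec (f T) y) as [HTy | HTy]; [exists T; split; [lra | exact HTy] |].
destruct (right_continuous0_near f (f 0 - y) T Rf) as [d [Hd Hnear]]; [lra | lra |].
specialize (Hnear (d / 2) ltac:(lra)). apply Rabs_def2 in Hnear.
destruct (Ranalysis5.IVT_interv (fun t => y - f t) (d / 2) T) as [z [Hz Hfz]];
  [| lra | lra | lra |].
- intros t Ht. apply continuity_pt_minus; [apply continuity_pt_const; intros ? ? ; reflexivity |].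
  apply Cf. lra.
- exists z. split; lra.
Qed.

Lemma ln_le_sub1 (x : R) : 0 < x -> ln x <= x - 1.
Proof. intros Hx. pose proof (exp_ineq1_le (ln x)) as H. rewrite exp_ln in H by exact Hx. lra. Qed.

Section LinearODE.

Variables f h : R -> R.
Hypothesis f_deriv : forall t, 0 < t -> is_derive f t (h t * f t).
Hypothesis f_rc : right_continuous0 f.
Hypothesis h_rc : right_continuous0 h.
Hypothesis h_cont : forall t, 0 < t -> continuity_pt h t.

(* Gronwall: if |h| <= M on (0, T], then f t ^ 2 * exp (c * t) is monotone
   for c = 2M and for c = -2M. *)
Lemma linear_ode_sq_bounds (T : R) :
  0 < T ->
  exists K, f 0 ^ 2 <= f T ^ 2 * exp (K * T) /\ f T ^ 2 <= f 0 ^ 2 * exp (K * T).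
Proof.
intros HT.
destruct (right_continuous0_bounded h T HT h_rc h_cont) as [M HM].
set (psi c t := f t ^ 2 * exp (c * t)).
assert (psi_deriv : forall c t, 0 < t -> is_derive (psi c) t (psi c t * (2 * h t + c))).
{ intros c t Ht. pose proof (f_deriv t Ht) as Df. unfold psi.
  auto_derive; [eexists; exact Df |]. rewrite (Derive_eta _ _ _ Df). ring. }
assert (psi_rc : forall c, right_continuous0 (psi c)).
{ intros c. apply right_continuous0_mult.
  - apply (right_continuous0_comp f (fun x => x ^ 2) f_rc).
    apply (@ex_derive_continuous R_AbsRing R_NormedModule). auto_derive. exact I.
  - apply continuous_right_continuous0, (@ex_derive_continuous R_AbsRing R_NormedModule).
    auto_derive. exact I. }
assert (psi_nonneg : forall c t, 0 <= psi c t).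
{ intros c t. apply Rmult_le_pos; [apply pow2_ge_0 | apply Rlt_le, exp_pos]. }
assert (psi0 : forall c, psi c 0 = f 0 ^ 2)
  by (intros c; unfold psi; rewrite Rmult_0_r, exp_0; ring).
assert (h_bounds : forall t, 0 < t -> 0 <= t <= T -> - M <= h t <= M).
{ intros t Ht HtT. apply Rabs_le_between, HM. lra. }
exists (2 * M). split.
- assert (Hle : psi (2 * M) 0 <= psi (2 * M) T).
  { apply (nondecreasing_of_deriv_nonneg _ (fun t => psi (2 * M) t * (2 * h t + 2 * M)) 0 T);
      [lra | apply psi_deriv | | apply psi_rc].
    intros t Ht HtT. specialize (h_bounds t Ht HtT). pose proof (psi_nonneg (2 * M) t). nra. }
  rewrite psi0 in Hle. exact Hle.
- assert (Hle : psi (- (2 * M)) T <= psi (- (2 * M)) 0).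
  { apply (nonincreasing_of_deriv_nonpos _
             (fun t => psi (- (2 * M)) t * (2 * h t + - (2 * M))) 0 T);
      [lra | apply psi_deriv | | apply psi_rc].
    intros t Ht HtT. specialize (h_bounds t Ht HtT). pose proof (psi_nonneg (- (2 * M)) t). nra. }
  rewrite psi0 in Hle. unfold psi in Hle.
  apply (Rmult_le_compat_r (exp (2 * M * T))) in Hle; [| apply Rlt_le, exp_pos].
  rewrite Rmult_assoc, <- exp_plus in Hle.
  replace (- (2 * M) * T + 2 * M * T) with 0 in Hle by ring.
  rewrite exp_0, Rmult_1_r in Hle. exact Hle.
Qed.

Lemma linear_ode_eq0 : f 0 = 0 -> forall t, 0 <= t -> f t = 0.
Proof.
intros H0 t Ht. destruct (Req_dec t 0) as [-> | Ht0]; [exact H0 |].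
destruct (linear_ode_sq_bounds t ltac:(lra)) as [K [_ Hle]].
rewrite H0 in Hle. pose proof (pow2_ge_0 (f t)). nra.
Qed.

Lemma linear_ode_neq0 : f 0 <> 0 -> forall t, 0 <= t -> f t <> 0.
Proof.
intros H0 t Ht Hft. destruct (Req_dec t 0) as [-> | Ht0]; [exact (H0 Hft) |].
destruct (linear_ode_sq_bounds t ltac:(lra)) as [K [Hle _]].
rewrite Hft in Hle. apply H0. nra.
Qed.

Lemma linear_ode_sign : f 0 <> 0 -> forall t, 0 <= t -> 0 < f 0 * f t.
Proof.
intros H0 t Ht.
destruct (Rlt_or_le 0 (f 0 * f t)) as [| Hle]; [assumption | exfalso].
pose proof (Rsqr_pos_lt (f 0) H0) as Hsq. unfold Rsqr in Hsq.
destruct (IVT_from0 (fun u => f 0 * f u) 0 t) as [z [Hz Hfz]]; [| | exact Ht | lra |].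
- apply (right_continuous0_comp f (fun x => f 0 * x) f_rc).
  apply (@ex_derive_continuous R_AbsRing R_NormedModule). auto_derive. exact I.
- intros u Hu. exact (continuity_pt_scal f (f 0) u (is_derive_continuity_pt _ _ _ (f_deriv u Hu))).
- apply (linear_ode_neq0 H0 z); [lra |].
  destruct (Rmult_integral _ _ Hfz); [contradiction | assumption].
Qed.

Lemma linear_ode_pos : 0 < f 0 -> forall t, 0 <= t -> 0 < f t.
Proof. intros H0 t Ht. pose proof (linear_ode_sign ltac:(lra) t Ht). nra. Qed.

Lemma linear_ode_le_max0 :
  (forall t, 0 < t -> h t <= 0) -> forall t, 0 <= t -> f t <= Rmax (f 0) 0.
Proof.
intros Hh t Ht. pose proof (Rmax_l (f 0) 0). pose proof (Rmax_r (f 0) 0).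
destruct (Rtotal_order (f 0) 0) as [Hneg | [Hzero | Hpos]].
- pose proof (linear_ode_sign ltac:(lra) t Ht). nra.
- rewrite (linear_ode_eq0 Hzero t Ht). lra.
- enough (f t <= f 0) by lra.
  apply (nonincreasing_of_deriv_nonpos f (fun u => h u * f u) 0 t);
    [lra | exact f_deriv | | exact f_rc].
  intros u Hu _. pose proof (Hh u Hu). pose proof (linear_ode_pos Hpos u ltac:(lra)). nra.
Qed.

End LinearODE.

Definition infected (ia ir : R -> R) (t : R) : R := ia t + ir t.

Definition eff_rate (beta beta_a : R) (sa sr : R -> R) (t : R) : R :=
  beta * (sa t + sr t) - beta_a * sa t.

Section ASIR.

Variables (beta beta_a alpha : R) (sa sr ia ir r : R -> R).
Hypothesis beta_pos : 0 < beta.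
Hypothesis alpha_pos : 0 < alpha.
Hypothesis sol : ASIR_solution beta beta_a alpha sa sr ia ir r.
Hypothesis infected0_pos : 0 < infected ia ir 0.

Local Notation i := (infected ia ir).
Local Notation w := (eff_rate beta beta_a sa sr).

Lemma infected_deriv (t : R) : 0 < t -> is_derive i t ((w t - alpha) * i t).
Proof.
intros Ht. pose proof (proj1 sol t Ht) as Dt. cbv zeta in Dt.
destruct Dt as [_ [_ [Dia [Dir _]]]].
unfold infected. auto_derive; [repeat split; eexists; eassumption |].
rewrite (Derive_eta _ _ _ Dia), (Derive_eta _ _ _ Dir). unfold eff_rate. ring.
Qed.

Lemma eff_rate_deriv (t : R) : 0 < t -> is_derive w t (- beta * i t * w t).
Proof.
intros Ht. pose proof (proj1 sol t Ht) as Dt. cbv zeta in Dt.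
destruct Dt as [Dsa [Dsr _]].
unfold eff_rate. auto_derive; [repeat split; eexists; eassumption |].
rewrite (Derive_eta _ _ _ Dsa), (Derive_eta _ _ _ Dsr). unfold infected. ring.
Qed.

Lemma infected_rc : right_continuous0 i.
Proof. destruct sol as [_ [_ [_ [Ria [Rir _]]]]]. exact (right_continuous0_plus ia ir Ria Rir). Qed.

Lemma eff_rate_rc : right_continuous0 w.
Proof.
destruct sol as [_ [Rsa [Rsr _]]].
apply right_continuous0_minus.
- apply (right_continuous0_comp (fun t => sa t + sr t) (fun x => beta * x)).
  + exact (right_continuous0_plus sa sr Rsa Rsr).
  + apply (@ex_derive_continuous R_AbsRing R_NormedModule). auto_derive. exact I.
- apply (right_continuous0_comp sa (fun x => beta_a * x) Rsa).
  apply (@ex_derive_continuous R_AbsRing R_NormedModule). auto_derive. exact I.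
Qed.

Lemma infected_cont (t : R) : 0 < t -> continuity_pt i t.
Proof. intros Ht. exact (is_derive_continuity_pt _ _ _ (infected_deriv t Ht)). Qed.

Lemma eff_rate_cont (t : R) : 0 < t -> continuity_pt w t.
Proof. intros Ht. exact (is_derive_continuity_pt _ _ _ (eff_rate_deriv t Ht)). Qed.

Lemma eff_rate_coeff_rc : right_continuous0 (fun u => - beta * i u).
Proof.
apply (right_continuous0_comp i (fun x => - beta * x) infected_rc).
apply (@ex_derive_continuous R_AbsRing R_NormedModule). auto_derive. exact I.
Qed.

Lemma eff_rate_coeff_cont (t : R) : 0 < t -> continuity_pt (fun u => - beta * i u) t.
Proof. intros Ht. exact (continuity_pt_scal i (- beta) t (infected_cont t Ht)). Qed.

Lemma infected_pos (t : R) : 0 <= t -> 0 < i t.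
Proof.
apply (linear_ode_pos i (fun u => w u - alpha) infected_deriv infected_rc);
  [| | exact infected0_pos].
- apply (right_continuous0_minus w (fun _ => alpha) eff_rate_rc).
  apply continuous_right_continuous0, continuous_const.
- intros u Hu. apply continuity_pt_minus; [exact (eff_rate_cont u Hu) |].
  apply continuity_pt_const. intros ? ?. reflexivity.
Qed.

Lemma infected_max_no_peak : w 0 <= alpha -> is_max_on_nonneg i (i 0).
Proof.
intros Hw0. split; [exists 0; split; [lra | reflexivity] |].
intros t Ht.
assert (w_le : forall u, 0 <= u -> w u <= alpha).
{ intros u Hu.
  assert (coeff_nonpos : forall v, 0 < v -> - beta * i v <= 0).
  { intros v Hv. pose proof (infected_pos v ltac:(lra)). nra. }
  pose proof (linear_ode_le_max0 w _ eff_rate_deriv eff_rate_rc eff_rate_coeff_rc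
                eff_rate_coeff_cont coeff_nonpos u Hu).
  pose proof (Rmax_lub (w 0) 0 alpha Hw0 (Rlt_le _ _ alpha_pos)). lra. }
apply (nonincreasing_of_deriv_nonpos i (fun u => (w u - alpha) * i u) 0 t);
  [lra | exact infected_deriv | | exact infected_rc].
intros u Hu _. pose proof (w_le u ltac:(lra)). pose proof (infected_pos u ltac:(lra)). nra.
Qed.

Section Outbreak.

Hypothesis outbreak : alpha < w 0.

Lemma eff_rate_pos (t : R) : 0 <= t -> 0 < w t.
Proof.
apply (linear_ode_pos w _ eff_rate_deriv eff_rate_rc eff_rate_coeff_rc eff_rate_coeff_cont).
lra.
Qed.

Lemma infected_first_integral (t : R) :
  0 <= t -> i t + (w t - alpha * ln (w t)) / beta = i 0 + (w 0 - alpha * ln (w 0)) / beta.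
Proof.
intros Ht.
set (V u := i u + (w u - alpha * ln (w u)) / beta).
assert (V_deriv : forall u, 0 < u -> is_derive V u 0).
{ intros u Hu. pose proof (infected_deriv u Hu) as Di. pose proof (eff_rate_deriv u Hu) as Dw.
  pose proof (eff_rate_pos u ltac:(lra)).
  unfold V. auto_derive; [repeat split; try (eexists; eassumption); lra |].
  rewrite (Derive_eta _ _ _ Di), (Derive_eta _ _ _ Dw). field. lra. }
assert (V_rc : right_continuous0 V).
{ apply (right_continuous0_plus i _ infected_rc).
  apply (right_continuous0_comp w (fun x => (x - alpha * ln x) / beta) eff_rate_rc).
  pose proof (eff_rate_pos 0 (Rle_refl 0)).
  apply (@ex_derive_continuous R_AbsRing R_NormedModule). auto_derive. lra. }
apply Rle_antisym.
- apply (nonincreasing_of_deriv_nonpos V (fun _ => 0) 0 t); [lra | exact V_deriv | | exact V_rc].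
  intros. lra.
- apply (nondecreasing_of_deriv_nonneg V (fun _ => 0) 0 t); [lra | exact V_deriv | | exact V_rc].
  intros. lra.
Qed.

Lemma ln_eff_rate_decay (T : R) :
  0 <= T -> (forall u, 0 <= u <= T -> alpha < w u) -> ln (w T) + beta * i 0 * T <= ln (w 0).
Proof.
intros HT w_gt.
assert (i_ge : forall u, 0 <= u <= T -> i 0 <= i u).
{ intros u Hu.
  apply (nondecreasing_of_deriv_nonneg i (fun v => (w v - alpha) * i v) 0 u);
    [lra | exact infected_deriv | | exact infected_rc].
  intros v Hv Hvu. pose proof (w_gt v ltac:(lra)). pose proof (infected_pos v ltac:(lra)). nra. }
set (G u := ln (w u) + beta * i 0 * u).
enough (G T <= G 0) by (unfold G in *; rewrite Rmult_0_r, Rplus_0_r in *; lra).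
apply (nonincreasing_of_deriv_nonpos G (fun u => beta * (i 0 - i u)) 0 T); [lra | | | ].
- intros u Hu. pose proof (eff_rate_deriv u Hu) as Dw. pose proof (eff_rate_pos u ltac:(lra)).
  unfold G. auto_derive; [repeat split; try (eexists; eassumption); lra |].
  rewrite (Derive_eta _ _ _ Dw). field. lra.
- intros u Hu HuT. pose proof (i_ge u ltac:(lra)). nra.
- apply right_continuous0_plus.
  + apply (right_continuous0_comp w ln eff_rate_rc), continuous_ln, eff_rate_pos. lra.
  + apply continuous_right_continuous0, (@ex_derive_continuous R_AbsRing R_NormedModule).
    auto_derive. exact I.
Qed.

Lemma eff_rate_reaches_alpha : exists t, 0 <= t /\ w t = alpha.
Proof.
set (T := (ln (w 0) - ln alpha) / (beta * i 0)).
assert (HT : 0 <= T).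
{ unfold T. apply Rle_mult_inv_pos; [| nra].
  pose proof (ln_increasing alpha (w 0) alpha_pos outbreak). lra. }
destruct (Rle_or_lt (w T) alpha) as [HwT | HwT].
{ destruct (IVT_from0 w alpha T eff_rate_rc eff_rate_cont HT) as [z [Hz Hwz]]; [lra |].
  exists z. split; [lra | exact Hwz]. }
exfalso.
assert (w_gt : forall u, 0 <= u <= T -> alpha < w u).
{ intros u Hu. enough (w T <= w u) by lra.
  apply (nonincreasing_of_deriv_nonpos w (fun v => - beta * i v * w v) u T);
    [lra | exact eff_rate_deriv | | exact eff_rate_rc].
  intros v Hv _. pose proof (infected_pos v ltac:(lra)). pose proof (eff_rate_pos v ltac:(lra)).
  assert (0 < beta * i v) by nra. nra. }
pose proof (ln_eff_rate_decay T HT w_gt).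
assert (beta * i 0 * T = ln (w 0) - ln alpha) by (unfold T; field; lra).
pose proof (ln_increasing alpha (w T) alpha_pos HwT). lra.
Qed.

Lemma infected_max_peak :
  is_max_on_nonneg i (i 0 + (w 0 - alpha) / beta + alpha / beta * ln (alpha / w 0)).
Proof.
pose proof (eff_rate_pos 0 (Rle_refl 0)) as Hw0.
assert (gap : forall t, 0 <= t ->
  i t = i 0 + (w 0 - alpha) / beta + alpha / beta * ln (alpha / w 0)
        + alpha / beta * (ln (w t / alpha) - (w t / alpha - 1))).
{ intros t Ht. pose proof (eff_rate_pos t Ht).
  assert (Hi : i t = i 0 + (w 0 - alpha * ln (w 0)) / beta - (w t - alpha * ln (w t)) / beta)
    by (pose proof (infected_first_integral t Ht); lra).
  rewrite Hi, !ln_div by lra. field. lra. }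
split.
- destruct eff_rate_reaches_alpha as [z [Hz Hwz]]. exists z. split; [exact Hz |].
  rewrite (gap z Hz), Hwz, Rdiv_diag, ln_1 by lra. ring.
- intros t Ht. rewrite (gap t Ht).
  pose proof (eff_rate_pos t Ht).
  pose proof (ln_le_sub1 (w t / alpha) ltac:(apply Rdiv_lt_0_compat; lra)).
  assert (0 < alpha / beta) by (apply Rdiv_lt_0_compat; lra). nra.
Qed.

End Outbreak.

End ASIR.

Theorem theorem4 (beta beta_a alpha : R) (sa sr ia ir r : R -> R)
  (sa0 sr0 ia0 ir0 : R) :
  0 < beta -> 0 < beta_a -> 0 < alpha ->
  0 <= sa0 <= 1 -> 0 <= sr0 <= 1 -> 0 <= ia0 <= 1 -> 0 <= ir0 <= 1 ->
  sa0 + sr0 + ia0 + ir0 = 1 ->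
  0 < ia0 + ir0 ->
  sa 0 = sa0 -> sr 0 = sr0 -> ia 0 = ia0 -> ir 0 = ir0 -> r 0 = 0 ->
  ASIR_solution beta beta_a alpha sa sr ia ir r ->
  let i0 := ia0 + ir0 in
  let s0 := sa0 + sr0 in
  is_max_on_nonneg (fun t => ia t + ir t)
    (if Rlt_dec sa0 ((beta * s0 - alpha) / beta_a)
     then 1 - alpha / beta - beta_a / beta * sa0
          + alpha / beta * ln (alpha / (beta * s0 - beta_a * sa0))
     else i0).
Proof.
intros Hb Hba Hal _ _ _ _ Hsum Hi0 Esa Esr Eia Eir _ Hsol i0 s0.
change (fun t => ia t + ir t) with (infected ia ir).
assert (Hinf0 : infected ia ir 0 = i0) by (unfold infected, i0; rewrite Eia, Eir; reflexivity).
assert (Hw0 : eff_rate beta beta_a sa sr 0 = beta * s0 - beta_a * sa0)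
  by (unfold eff_rate, s0; rewrite Esa, Esr; reflexivity).
assert (Hpos : 0 < infected ia ir 0) by (rewrite Hinf0; exact Hi0).
destruct (Rlt_dec sa0 ((beta * s0 - alpha) / beta_a)) as [Hlt | Hge].
- apply (Rlt_div_r sa0) in Hlt; [| lra].
  assert (Hout : alpha < eff_rate beta beta_a sa sr 0) by (rewrite Hw0; lra).
  pose proof (infected_max_peak beta beta_a alpha sa sr ia ir r Hb Hal Hsol Hpos Hout) as Hmax.
  rewrite Hinf0, Hw0 in Hmax.
  replace (1 - alpha / beta - beta_a / beta * sa0
           + alpha / beta * ln (alpha / (beta * s0 - beta_a * sa0)))
    with (i0 + (beta * s0 - beta_a * sa0 - alpha) / beta
          + alpha / beta * ln (alpha / (beta * s0 - beta_a * sa0))); [exact Hmax |].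
  rewrite <- Hsum. unfold i0, s0. field. lra.
- apply Rnot_lt_le, (Rle_div_l (beta * s0 - alpha)) in Hge; [| lra].
  rewrite <- Hinf0.
  apply (infected_max_no_peak beta beta_a alpha sa sr ia ir r Hb Hal Hsol Hpos).
  rewrite Hw0. lra.
Qed.
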